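(* Let $l\ge 1$ and let $a_1,\dots,a_{2l+1}$ be a chain of simple closed curves on an oriented surface ($a_i$ and $a_{i+1}$ meet transversely once, $a_i\cap a_j=\emptyset$ for $|i-j|\ge2$). Define $\phi_l=a_{2l+1}^{\,l+1}a_{2l-1}^{\,l}\cdots a_5^{3}a_3^{2}a_1$. Let $D=d_1\cdots d_{k_1}$ and $E=e_1\cdots e_{k_2}$ be arbitrary products of right-handed Dehn twists, and write ${}_{\psi}(D)={}_{\psi}(d_1)\cdots{}_{\psi}(d_{k_1})$, ${}_{\psi}(E)={}_{\psi}(e_1)\cdots{}_{\psi}(e_{k_2})$. Then (a) $D\cdot a_{2l}\cdots a_2a_1\cdot a_{2l+1}\cdots a_2a_1\cdot E\ \sim_C\ {}_{\phi_l}(D)\cdot(a_{2l+1}^{\,l+1}\, a_{2l}\cdots a_2a_1)\cdot(b_{2l}\cdots b_4 b_2)\cdot{}_{\phi_l}(E)$; (b) $D\cdot a_1a_2\cdots a_{2l+1}\cdot a_1a_2\cdots a_{2l}\cdot E\ \sim_C\ {}_{\phi_l^{-1}}(D)\cdot(\bar b_2\bar b_4\cdots\bar b_{2l})\cdot(a_1a_2\cdots a_{2l}\,a_{2l+1}^{\,l+1})\cdot{}_{\phi_l^{-1}}(E)$.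
   Context: $a_i$ denotes the right-handed Dehn twist $t_{a_i}$; for a mapping class $f$ and a Dehn twist $t_x$, ${}_f(x)$ denotes $t_{f(x)}=ft_xf^{-1}$. $b_i=t_{a_{i+1}}(a_i)$ and $\bar b_i=t_{a_{i+1}}^{-1}(a_i)$. Words of Dehn twists are related by $\sim_C$ if one is obtained from the other by a finite sequence of elementary transformations ($\cdots t_vt_w\cdots\leftrightarrow\cdots t_{t_v(w)}t_v\cdots$) and conjugations, where a conjugation moves the last letter of a word to the front (or vice versa), i.e. cyclic permutation, equivalently simultaneous conjugation of all letters. *)

From mathcomp Require Import all_boot.
From Stdlib Require Import Relation_Operators.

Set Implicit Arguments.
Unset Strict Implicit.
Unset Printing Implicit Defensive.

(* Composition convention: [mcg_mul f g] is "first g, then f". *)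
Record surface := Surface {
  Curve : Type;
  MCG : Type;
  mcg_mul : MCG -> MCG -> MCG;
  mcg_one : MCG;
  mcg_inv : MCG -> MCG;
  mcg_mulA : forall f g h, mcg_mul f (mcg_mul g h) = mcg_mul (mcg_mul f g) h;
  mcg_mul1 : forall f, mcg_mul mcg_one f = f;
  mcg_mulV : forall f, mcg_mul (mcg_inv f) f = mcg_one;
  act : MCG -> Curve -> Curve;
  act_one : forall x, act mcg_one x = x;
  act_mul : forall f g x, act (mcg_mul f g) x = act f (act g x);
  (* right-handed Dehn twist about a curve *)
  tw : Curve -> MCG;
  tw_conj : forall f x, tw (act f x) = mcg_mul (mcg_mul f (tw x)) (mcg_inv f);
  disjoint : Curve -> Curve -> Prop;
  meet_once : Curve -> Curve -> Prop;
  disjoint_sym : forall x y, disjoint x y -> disjoint y x;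
  meet_once_sym : forall x y, meet_once x y -> meet_once y x;
  disjoint_act : forall f x y, disjoint (act f x) (act f y) <-> disjoint x y;
  meet_once_act : forall f x y, meet_once (act f x) (act f y) <-> meet_once x y;
  tw_disjoint : forall x y, disjoint x y -> act (tw x) y = y;
  tw_self : forall x, act (tw x) x = x;
  tw_meet_once : forall x y, meet_once x y -> act (tw x) (act (tw y) x) = y
}.

Section Words.
Variable S : surface.

Definition mcg_prod (s : seq (MCG S)) : MCG S := foldr (@mcg_mul S) (@mcg_one S) s.
Definition mcg_pow (g : MCG S) (n : nat) : MCG S := mcg_prod (nseq n g).

(* A word of right-handed Dehn twists t_{x_1} ... t_{x_k} is recorded by the
   sequence of its curves [x_1; ...; x_k]. *)
Definition word := seq (Curve S).

Inductive hstep : word -> word -> Prop :=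
  | hstep_elem (p q : word) (v w : Curve S) :
      hstep (p ++ v :: w :: q) (p ++ act (tw v) w :: v :: q)
  | hstep_conj (s : word) (x : Curve S) :
      hstep (rcons s x) (x :: s).

Definition simC : word -> word -> Prop := clos_refl_sym_trans word hstep.

Definition conjw (f : MCG S) (D : word) : word := map (act f) D.

End Words.

Definition down S (a : nat -> Curve S) (k : nat) : word S := map a (rev (iota 1 k)).
Definition up S (a : nat -> Curve S) (k : nat) : word S := map a (iota 1 k).

Definition bcurve S (a : nat -> Curve S) (i : nat) : Curve S :=
  act (tw (a i.+1)) (a i).
Definition bbar S (a : nat -> Curve S) (i : nat) : Curve S :=
  act (mcg_inv (tw (a i.+1))) (a i).

(* phi_l = a_{2l+1}^{l+1} a_{2l-1}^l ... a_3^2 a_1 *)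
Definition phi S (a : nat -> Curve S) (l : nat) : MCG S :=
  mcg_prod [seq mcg_pow (tw (a k.*2.+1)) k.+1 | k <- rev (iota 0 l.+1)].

Definition is_chain S (a : nat -> Curve S) (n : nat) : Prop :=
  (forall i, 1 <= i -> i < n -> meet_once (a i) (a i.+1)) /\
  (forall i j, 1 <= i -> i.+2 <= j -> j <= n -> disjoint (a i) (a j)).

(* Write x, y, z for a_{2l+1}, a_{2l+2}, a_{2l+3}. In part (a) the letters z and y commute
   with a_{2l} ... a_1, so the word for l+1 is the block y x z y followed by the word for l.
   By induction the latter is rewritten while everything around it, the block included, is
   conjugated by phi_l; this turns the block into y' x z y' with y' = t_x^{l+1}(y).
   A computation inside the three-chain x, y, z then rewrites y' x z y' x^{l+1} as
   z^{l+2} y x b_{2l+2} while conjugating the surroundings by t_z^{l+2}, and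
   phi_{l+1} = t_z^{l+2} phi_l. That computation rests on t_y^-1 t_z^-1 t_x^-1 t_y^-1 (x) = z:
   a letter x crossing the block y x z y comes out as z. Part (b) is the mirror argument
   with inverse twists. *)

From mathcomp Require Import all_boot zify.
From Stdlib Require Import Relation_Operators Setoid Morphisms.

Set Implicit Arguments.
Unset Strict Implicit.
Unset Printing Implicit Defensive.

Lemma iter_commute (T : Type) (f g : T -> T) n x :
  (forall y, f (g y) = g (f y)) -> iter n f (g x) = g (iter n f x).
Proof. by move=> fg; elim: n => //= n ->. Qed.

Lemma iter_can (T : Type) (f g : T -> T) n : cancel f g -> cancel (iter n f) (iter n g).
Proof. by move=> fK; elim: n => // n IH x; rewrite iterSr iterS fK IH. Qed.

Lemma foldl_nseq (T R : Type) (f : R -> T -> R) r n x :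
  foldl f r (nseq n x) = iter n (f^~ x) r.
Proof. by elim: n r => //= n IH r; rewrite IH -iterSr. Qed.

Lemma foldr_nseq (T R : Type) (f : T -> R -> R) r n x :
  foldr f r (nseq n x) = iter n (f x) r.
Proof. by elim: n => //= n ->. Qed.

Lemma map_iter_fix (T : Type) (f : T -> T) n s : map f s = s -> map (iter n f) s = s.
Proof. by move=> fs; elim: n => [|n IH]; rewrite ?map_id // (eq_map (iterS n f)) map_comp IH. Qed.

Lemma nseqSr (T : Type) n (x : T) : nseq n.+1 x = nseq n x ++ [:: x].
Proof. by rewrite -addn1 nseqD. Qed.

Lemma iotaSr m n : iota m n.+1 = iota m n ++ [:: m + n].
Proof. by rewrite -addn1 iotaD. Qed.

Section MappingClasses.
Variable S : surface.
Implicit Types (f g : MCG S) (c x y : Curve S).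

Lemma mcg_mulgV f : mcg_mul f (mcg_inv f) = mcg_one S.
Proof.
rewrite -[LHS]mcg_mul1 -(mcg_mulV (mcg_inv f)) -mcg_mulA (mcg_mulA (mcg_inv f)).
by rewrite mcg_mulV mcg_mul1.
Qed.

Lemma actK f : cancel (act f) (act (mcg_inv f)).
Proof. by move=> c; rewrite -act_mul mcg_mulV act_one. Qed.

Lemma actVK f : cancel (act (mcg_inv f)) (act f).
Proof. by move=> c; rewrite -act_mul mcg_mulgV act_one. Qed.

Lemma act_inj f : injective (act f).
Proof. exact: can_inj (actK f). Qed.

Lemma act_invM f g c : act (mcg_inv (mcg_mul f g)) c = act (mcg_inv g) (act (mcg_inv f) c).
Proof. by apply: (@act_inj (mcg_mul f g)); rewrite actVK act_mul !actVK. Qed.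

Lemma act_pow g n c : act (mcg_pow g n) c = iter n (act g) c.
Proof. by elim: n => [|n IH] /=; rewrite ?act_one // act_mul IH. Qed.

Lemma act_invpow g n c : act (mcg_inv (mcg_pow g n)) c = iter n (act (mcg_inv g)) c.
Proof.
apply: (@act_inj (mcg_pow g n)); rewrite actVK act_pow.
by rewrite (iter_can n (actVK g)).
Qed.

Lemma act_inv_fix f c : act f c = c -> act (mcg_inv f) c = c.
Proof. by move=> fc; rewrite -{1}fc actK. Qed.

Lemma act_inv_commute f g :
  (forall c, act f (act g c) = act g (act f c)) ->
  forall c, act (mcg_inv f) (act (mcg_inv g) c) = act (mcg_inv g) (act (mcg_inv f) c).
Proof. by move=> fg c; apply: (@act_inj g); apply: (@act_inj f); rewrite fg !actVK. Qed.

Lemma map_act_inv_fix f (s : seq (Curve S)) : map (act f) s = s -> map (act (mcg_inv f)) s = s.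
Proof.
by move=> fs; apply: (inj_map (@act_inj f)); rewrite -map_comp (eq_map (actVK f)) map_id.
Qed.

Lemma disjoint_act_fix f x y : act f x = x -> disjoint x y -> disjoint x (act f y).
Proof. by move=> fx xy; rewrite -fx; apply/disjoint_act. Qed.

Lemma twV_disjoint x y : disjoint x y -> act (mcg_inv (tw x)) y = y.
Proof. by move=> /tw_disjoint; apply: act_inv_fix. Qed.

Lemma tw_commute x y c :
  disjoint x y -> act (tw x) (act (tw y) c) = act (tw y) (act (tw x) c).
Proof. by move=> /tw_disjoint xy; rewrite -{2}xy tw_conj !act_mul actK. Qed.

Lemma tw_meet_onceV x y : meet_once x y -> act (tw y) x = act (mcg_inv (tw x)) y.
Proof. by move=> xy; apply: (@act_inj (tw x)); rewrite actVK tw_meet_once. Qed.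

End MappingClasses.

Section Words.
Variable S : surface.
Implicit Types (c x : Curve S) (D E M N P Q V W : word S).

#[global] Instance simC_equiv : Equivalence (@simC S).
Proof. by split; [exact: rst_refl | exact: rst_sym | exact: rst_trans]. Qed.

Lemma simC_rot s x : simC (s ++ [:: x]) (x :: s).
Proof. by rewrite cats1; apply: rst_step; apply: hstep_conj. Qed.

(* Conjugation moves are not local, so [simL] is finer than [simC]; it is the
   relation that can be rewritten inside words. *)
Definition simL M M' := forall P Q, simC (P ++ M ++ Q) (P ++ M' ++ Q).

#[global] Instance simL_equiv : Equivalence simL.
Proof.
split=> [M P Q | M M' MM' P Q | M1 M2 M3 M12 M23 P Q].
- reflexivity.
- by symmetry.
- by rewrite (M12 P Q); apply: M23.
Qed.

Lemma simL_cat M M' N N' : simL M M' -> simL N N' -> simL (M ++ N) (M' ++ N').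
Proof.
move=> MM' NN' P Q; rewrite -!catA (MM' P (N ++ Q)).
by have := NN' (P ++ M') Q; rewrite -!catA.
Qed.

#[global] Instance cat_simL : Proper (simL ==> simL ==> simL) (@cat (Curve S)).
Proof. by move=> M M' MM' N N' NN'; apply: simL_cat. Qed.

#[global] Instance cons_simL x : Proper (simL ==> simL) (cons x).
Proof. by move=> M M' MM'; apply: (simL_cat (reflexivity [:: x]) MM'). Qed.

Lemma simL_elem v w W : simL [:: v, w & W] [:: act (tw v) w, v & W].
Proof. by move=> P Q; apply: rst_step; apply: hstep_elem. Qed.

Lemma simL_elemV v w W : simL [:: w, v & W] [:: v, act (mcg_inv (tw v)) w & W].
Proof. by symmetry; have := simL_elem v (act (mcg_inv (tw v)) w) W; rewrite actVK. Qed.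

Lemma simL_pass_right x E W : simL (x :: E ++ W) (map (act (tw x)) E ++ x :: W).
Proof.
elim: E => [|e E IH] /=; first reflexivity.
by rewrite -IH; exact: simL_elem.
Qed.

Lemma simL_pass_left x D W : simL (D ++ x :: W) (x :: map (act (mcg_inv (tw x))) D ++ W).
Proof.
elim: D => [|d D IH] /=; first reflexivity.
by rewrite IH; exact: simL_elemV.
Qed.

Lemma simL_slide_right c V W :
  simL (c :: V ++ W) (V ++ foldl (fun d v => act (mcg_inv (tw v)) d) c V :: W).
Proof.
elim: V c => [|v V IH] c /=; first reflexivity.
by rewrite -IH; exact: simL_elemV.
Qed.

Lemma simL_slide_left V c W :
  simL (V ++ c :: W) (foldr (fun v d => act (tw v) d) c V :: V ++ W).
Proof.
elim: V => [|v V IH] /=; first reflexivity.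
by rewrite IH; exact: simL_elem.
Qed.

Lemma simL_commute_right c M W :
  map (act (tw c)) M = M -> simL (c :: M ++ W) (M ++ c :: W).
Proof. by move=> cM; rewrite simL_pass_right cM; reflexivity. Qed.

Lemma simL_commute_left c M W :
  map (act (tw c)) M = M -> simL (M ++ c :: W) (c :: M ++ W).
Proof. by move=> /map_act_inv_fix cM; rewrite simL_pass_left cM; reflexivity. Qed.

Definition transports M (F : Curve S -> Curve S) M' :=
  forall D E, simC (D ++ M ++ E) (map F D ++ M' ++ map F E).

#[global] Instance transports_simL : Proper (simL ==> eq ==> simL ==> iff) transports.
Proof.
move=> M1 M2 HM F _ <- N1 N2 HN; split=> T D E.
- by rewrite -(HM D E) -(HN (map F D) (map F E)).
- by rewrite (HM D E) (HN (map F D) (map F E)).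
Qed.

Lemma transports_ext M F G M' : F =1 G -> transports M F M' -> transports M G M'.
Proof. by move=> FG T D E; rewrite -!(eq_map FG). Qed.

Lemma transports_comp M F M1 G M' :
  transports M F M1 -> transports M1 G M' -> transports M (G \o F) M'.
Proof. by move=> T1 T2 D E; rewrite !(map_comp G F); apply: rst_trans (T1 D E) (T2 _ _). Qed.

Lemma transports_prefix P M F M' : transports M F M' -> transports (P ++ M) F (map F P ++ M').
Proof. by move=> T D E; have := T (D ++ P) E; rewrite map_cat -!catA. Qed.

Lemma transports_suffix Q M F M' : transports M F M' -> transports (M ++ Q) F (M' ++ map F Q).
Proof. by move=> T D E; have := T D (Q ++ E); rewrite map_cat -!catA. Qed.

Lemma transports_rot_right M x : transports (M ++ [:: x]) (act (tw x)) (x :: M).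
Proof.
move=> D E; rewrite -!catA /=.
transitivity (D ++ M ++ map (act (tw x)) E ++ [:: x]).
  by have := simL_pass_right x E [::] (D ++ M) [::]; rewrite !cats0 -!catA.
transitivity (x :: D ++ M ++ map (act (tw x)) E).
  by have := simC_rot (D ++ M ++ map (act (tw x)) E) x; rewrite -!catA.
by have := simL_pass_right x D (M ++ map (act (tw x)) E) [::] [::]; rewrite /= !cats0.
Qed.

Lemma transports_rot_left M x : transports (x :: M) (act (mcg_inv (tw x))) (M ++ [:: x]).
Proof.
move=> D E; rewrite -!catA /=.
transitivity (x :: map (act (mcg_inv (tw x))) D ++ M ++ E).
  by have := simL_pass_left x D (M ++ E) [::] [::]; rewrite /= !cats0.
transitivity (map (act (mcg_inv (tw x))) D ++ M ++ E ++ [:: x]).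
  by symmetry; have := simC_rot (map (act (mcg_inv (tw x))) D ++ M ++ E) x; rewrite -!catA.
by have := simL_pass_left x E [::] (map (act (mcg_inv (tw x))) D ++ M) [::]; rewrite !cats0 -!catA.
Qed.

Lemma transports_rotn_right M z n :
  transports (M ++ nseq n z) (iter n (act (tw z))) (nseq n z ++ M).
Proof.
elim: n M => [|n IH] M.
  by move=> D E; rewrite cats0 !map_id; reflexivity.
apply: (transports_ext (F := iter n (act (tw z)) \o act (tw z))) => [c|].
  by rewrite /= -iterSr.
have := transports_comp (transports_rot_right (M ++ nseq n z) z) (IH (z :: M)).
by rewrite nseqSr -!catA.
Qed.

Lemma transports_rotn_left z n M :
  transports (nseq n z ++ M) (iter n (act (mcg_inv (tw z)))) (M ++ nseq n z).
Proof.
elim: n M => [|n IH] M.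
  by move=> D E; rewrite cats0 !map_id; reflexivity.
apply: (transports_ext (F := iter n (act (mcg_inv (tw z))) \o act (mcg_inv (tw z)))) => [c|].
  by rewrite /= -iterSr.
have := transports_rot_left (nseq n z ++ M) z; rewrite -catA => T.
by have := transports_comp T (IH (M ++ [:: z])); rewrite -catA.
Qed.
End Words.

Section ThreeChain.
Variable S : surface.
Variables x y z : Curve S.
Hypotheses (xy : meet_once x y) (yz : meet_once y z) (xz : disjoint x z).

Lemma three_chain_down n :
  transports ([:: iter n (act (tw x)) y; x; z; iter n (act (tw x)) y] ++ nseq n x)
    (iter n.+1 (act (tw z))) (nseq n.+1 z ++ [:: y; x; act (tw z) y]).
Proof.
set y' := iter n (act (tw x)) y.
have braid m : simL (nseq m x ++ [:: y; x; z; y]) ([:: y; x; z; y] ++ nseq m z).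
  elim: m => [|m IH]; first by rewrite cats0; reflexivity.
  rewrite [nseq m.+1 x ++ _]/= IH (simL_slide_right x [:: y; x; z; y]) /=.
  rewrite -(tw_meet_onceV (meet_once_sym xy)) actK.
  by rewrite -(tw_meet_onceV (meet_once_sym yz)) actK; reflexivity.
have -> : simL ([:: y'; x; z; y'] ++ nseq n x) (nseq n x ++ [:: y; x; z; y]).
  have := simL_slide_right y' (nseq n x) [::].
  rewrite cats0 foldl_nseq (iter_can n (actK _)) /= => ->.
  rewrite (simL_pass_right z (nseq n x) [:: y]) map_nseq (tw_disjoint (disjoint_sym xz)).
  have := simL_slide_right y' (nseq n.+1 x) [:: z; y].
  rewrite foldl_nseq iterS (iter_can n (actK _)) /= => ->.
  rewrite -[x :: nseq n x ++ _]/(nseq n.+1 x ++ _) nseqSr -catA /=.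
  rewrite (simL_elem x (act (mcg_inv (tw x)) y)) actVK.
  reflexivity.
rewrite braid.
have T := transports_rot_right (nseq n z ++ [:: y; x; act (tw z) y]) z.
rewrite -catA /= -(simL_elem z y [::]) in T.
exact: transports_ext (transports_comp (transports_rotn_right _ z n) T).
Qed.

Lemma three_chain_up n :
  transports
    (nseq n x ++ [:: iter n (act (mcg_inv (tw x))) y; z; x; iter n (act (mcg_inv (tw x))) y])
    (iter n.+1 (act (mcg_inv (tw z)))) ([:: act (mcg_inv (tw z)) y; x; y] ++ nseq n.+1 z).
Proof.
set y' := iter n (act (mcg_inv (tw x))) y.
have braid m : simL ([:: y; z; x; y] ++ nseq m x) (nseq m z ++ [:: y; z; x; y]).
  elim: m => [|m IH]; first by rewrite cats0; reflexivity.
  rewrite !nseqSr catA IH -!catA.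
  have := simL_slide_left [:: y; z; x; y] x [::].
  rewrite /= (tw_meet_once xy) (tw_meet_once yz) => ->.
  reflexivity.
have -> : simL (nseq n x ++ [:: y'; z; x; y']) ([:: y; z; x; y] ++ nseq n x).
  rewrite (simL_slide_left (nseq n x) y' [:: z; x; y']) foldr_nseq (iter_can n (actVK _)).
  rewrite (simL_pass_left z (nseq n x) [:: x; y']) map_nseq (twV_disjoint (disjoint_sym xz)).
  have := simL_slide_left (nseq n.+1 x) y' [::].
  rewrite foldr_nseq iterS (iter_can n (actVK _)) cats0 {1}nseqSr -catA /= => ->.
  by rewrite (simL_elemV x (act (tw x) y) (nseq n x)) actK; reflexivity.
rewrite braid nseqSr catA.
have T := transports_rotn_left z n [:: y; z; x; y].
rewrite /= (simL_elemV z y [:: x, y & nseq n z]) in T.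
exact: transports_ext (transports_comp T (transports_rot_left _ z)).
Qed.
End ThreeChain.

Section Phi.
Variable S : surface.
Variable a : nat -> Curve S.
Implicit Types (c u : Curve S).

Lemma phiS l : phi a l.+1 = mcg_mul (mcg_pow (tw (a l.*2.+3)) l.+2) (phi a l).
Proof. by rewrite /phi iotaSr rev_cat /= add0n doubleS. Qed.

Lemma act_phi0 c : act (phi a 0) c = act (tw (a 1)) c.
Proof. by rewrite /phi /= !act_mul !act_one. Qed.

Lemma act_phiS l c : act (phi a l.+1) c = iter l.+2 (act (tw (a l.*2.+3))) (act (phi a l) c).
Proof. by rewrite phiS act_mul act_pow. Qed.

Lemma phi_fix l c : (forall k, k <= l -> disjoint (a k.*2.+1) c) -> act (phi a l) c = c.
Proof.
elim: l => [|l IH] dc; first by rewrite act_phi0 tw_disjoint //; apply: (dc 0).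
rewrite act_phiS IH => [|k kl]; last by apply: dc; apply: ltnW.
by apply: iter_fix; apply: tw_disjoint; apply: (dc l.+1).
Qed.

Lemma act_phi_top l c : (forall k, k < l -> disjoint (a k.*2.+1) c) ->
  act (phi a l) c = iter l.+1 (act (tw (a l.*2.+1))) c.
Proof. by case: l => [|l] dc; rewrite ?act_phi0 // act_phiS phi_fix. Qed.

Lemma phi_commute l u : (forall k, k <= l -> disjoint (a k.*2.+1) u) ->
  forall c, act (phi a l) (act (tw u) c) = act (tw u) (act (phi a l) c).
Proof.
elim: l => [|l IH] du c; first by rewrite !act_phi0 tw_commute //; apply: (du 0).
rewrite !act_phiS IH => [|k kl]; last by apply: du; apply: ltnW.
by apply: iter_commute => d; apply: tw_commute; apply: (du l.+1).
Qed.

Lemma act_phiV_top l c :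
  (forall k, k < l -> disjoint (a k.*2.+1) c) ->
  (forall k, k < l -> disjoint (a l.*2.+1) (a k.*2.+1)) ->
  act (mcg_inv (phi a l)) c = iter l.+1 (act (mcg_inv (tw (a l.*2.+1)))) c.
Proof.
move=> dc dtop; apply: (@act_inj _ (phi a l)); rewrite actVK act_phi_top.
  by rewrite (iter_can _ (actVK _)).
move=> k kl; rewrite -act_pow; apply: disjoint_act_fix; last exact: dc.
by rewrite act_pow; apply: iter_fix; apply: twV_disjoint; apply: dtop.
Qed.

Lemma act_phiVS l c : (forall k, k <= l -> disjoint (a k.*2.+1) (a l.*2.+3)) ->
  act (mcg_inv (phi a l.+1)) c
  = iter l.+2 (act (mcg_inv (tw (a l.*2.+3)))) (act (mcg_inv (phi a l)) c).
Proof.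
move=> dz; rewrite phiS act_invM act_invpow; symmetry; apply: iter_commute => d.
by apply: act_inv_commute => e; symmetry; apply: phi_commute.
Qed.

Lemma downS k : down a k.+1 = a k.+1 :: down a k.
Proof. by rewrite /down iotaSr rev_cat /= add1n. Qed.

Lemma upS k : up a k.+1 = up a k ++ [:: a k.+1].
Proof. by rewrite /up iotaSr map_cat /= add1n. Qed.

Lemma act_down_fix f k :
  (forall i, 0 < i <= k -> act f (a i) = a i) -> map (act f) (down a k) = down a k.
Proof.
move=> fa; rewrite /down -map_comp; apply/eq_in_map => i.
by rewrite mem_rev mem_iota => ik /=; apply: fa; lia.
Qed.

Lemma act_up_fix f k :
  (forall i, 0 < i <= k -> act f (a i) = a i) -> map (act f) (up a k) = up a k.
Proof.
move=> fa; rewrite /up -map_comp; apply/eq_in_map => i.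
by rewrite mem_iota => ik /=; apply: fa; lia.
Qed.

End Phi.

Section Chain.
Variable S : surface.
Variables (a : nat -> Curve S) (N : nat).
Hypothesis chain_a : is_chain a N.

Lemma chain_meet_once i : 0 < i -> i < N -> meet_once (a i) (a i.+1).
Proof. exact: chain_a.1. Qed.

Lemma chain_disjoint i j : 0 < i -> i.+2 <= j -> j <= N -> disjoint (a i) (a j).
Proof. exact: chain_a.2. Qed.

Lemma chain_disjoint_sym i j : 0 < i -> i.+2 <= j -> j <= N -> disjoint (a j) (a i).
Proof. by move=> *; apply: disjoint_sym; apply: chain_disjoint. Qed.

Lemma chain_tw_fix j i : 0 < i -> i.+2 <= j -> j <= N -> act (tw (a j)) (a i) = a i.
Proof. by move=> *; apply: tw_disjoint; apply: chain_disjoint_sym. Qed.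

Lemma down_fix_tw j k : k.+2 <= j <= N -> map (act (tw (a j))) (down a k) = down a k.
Proof. by move=> jN; apply: act_down_fix => i iN; apply: chain_tw_fix; lia. Qed.

Lemma up_fix_tw j k : k.+2 <= j <= N -> map (act (tw (a j))) (up a k) = up a k.
Proof. by move=> jN; apply: act_up_fix => i iN; apply: chain_tw_fix; lia. Qed.

Lemma down_fix_bcurve l : l.*2.+3 <= N ->
  map (act (tw (bcurve a l.*2.+2))) (down a l.*2) = down a l.*2.
Proof.
move=> lN; apply: act_down_fix => i iN; apply: tw_disjoint; apply: disjoint_sym.
apply: disjoint_act_fix; last by apply: chain_disjoint; lia.
by apply: chain_tw_fix; lia.
Qed.

Lemma up_fix_bbar l : l.*2.+3 <= N ->
  map (act (tw (bbar a l.*2.+2))) (up a l.*2) = up a l.*2.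
Proof.
move=> lN; apply: act_up_fix => i iN; apply: tw_disjoint; apply: disjoint_sym.
apply: disjoint_act_fix; last by apply: chain_disjoint; lia.
by apply: act_inv_fix; apply: chain_tw_fix; lia.
Qed.

Lemma bcurve_fix l : l.*2.+3 <= N ->
  map (act (tw (a l.*2.+3))) [seq bcurve a k.*2 | k <- rev (iota 1 l)]
  = [seq bcurve a k.*2 | k <- rev (iota 1 l)].
Proof.
move=> lN; rewrite -map_comp; apply/eq_in_map => k; rewrite mem_rev mem_iota => kl /=.
apply: tw_disjoint; apply: disjoint_act_fix; last by apply: chain_disjoint_sym; lia.
by apply: tw_disjoint; apply: chain_disjoint; lia.
Qed.

Lemma bbar_fix l : l.*2.+3 <= N ->
  map (act (tw (a l.*2.+3))) [seq bbar a k.*2 | k <- iota 1 l]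
  = [seq bbar a k.*2 | k <- iota 1 l].
Proof.
move=> lN; rewrite -map_comp; apply/eq_in_map => k; rewrite mem_iota => kl /=.
apply: tw_disjoint; apply: disjoint_act_fix; last by apply: chain_disjoint_sym; lia.
by apply: twV_disjoint; apply: chain_disjoint; lia.
Qed.

Lemma transports_down l : l.*2.+1 <= N ->
  transports (down a l.*2 ++ down a l.*2.+1) (act (phi a l))
    (nseq l.+1 (a l.*2.+1) ++ down a l.*2 ++ [seq bcurve a k.*2 | k <- rev (iota 1 l)]).
Proof.
elim: l => [|l IH] lN.
  by apply: transports_ext (transports_rot_right [::] (a 1)) => c; rewrite act_phi0.
rewrite doubleS in lN *; have {}IH := IH (leq_trans (leqnSn _) (ltnW lN)).
set x := a l.*2.+1; set y := a l.*2.+2; set z := a l.*2.+3.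
set Dn := down a l.*2; set Bs := [seq bcurve a k.*2 | k <- rev (iota 1 l)].
have xy : meet_once x y by apply: chain_meet_once; lia.
have yz : meet_once y z by apply: chain_meet_once; lia.
have xz : disjoint x z by apply: chain_disjoint; lia.
have -> : simL (down a l.*2.+2 ++ down a l.*2.+3) ([:: y; x; z; y] ++ Dn ++ x :: Dn).
  rewrite !downS -/x -/y -/z -/Dn /=.
  rewrite (simL_commute_left (c := z) (M := Dn)) ?(simL_commute_left (c := y) (M := Dn)).
  - reflexivity.
  - by apply: down_fix_tw; lia.
  - by apply: down_fix_tw; lia.
have T1 : transports ([:: y; x; z; y] ++ Dn ++ x :: Dn) (act (phi a l))
    ([:: iter l.+1 (act (tw x)) y; x; z; iter l.+1 (act (tw x)) y] ++ nseq l.+1 x ++ Dn ++ Bs).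
  have Px : act (phi a l) x = x.
    rewrite act_phi_top => [|k kl]; last by apply: chain_disjoint; lia.
    by apply: iter_fix; apply: tw_self.
  have Py : act (phi a l) y = iter l.+1 (act (tw x)) y.
    by rewrite act_phi_top => // k kl; apply: chain_disjoint; lia.
  have Pz : act (phi a l) z = z by rewrite phi_fix => // k kl; apply: chain_disjoint; lia.
  by move: (transports_prefix [:: y; x; z; y] IH); rewrite downS /= Px Py Pz.
have T2 := transports_suffix (Dn ++ Bs) (three_chain_down xy yz xz l.+1).
rewrite map_iter_fix -?catA in T2; last by rewrite map_cat down_fix_tw ?bcurve_fix //; lia.
have -> : [seq bcurve a k.*2 | k <- rev (iota 1 l.+1)] = bcurve a l.*2.+2 :: Bs.
  by rewrite iotaSr rev_cat /= add1n doubleS.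
rewrite !downS !cat_cons -(simL_commute_right (c := bcurve a l.*2.+2) (M := Dn) Bs).
  by apply: transports_ext (transports_comp T1 T2) => c; rewrite act_phiS.
exact: down_fix_bcurve.
Qed.

Lemma transports_up l : l.*2.+1 <= N ->
  transports (up a l.*2.+1 ++ up a l.*2) (act (mcg_inv (phi a l)))
    ([seq bbar a k.*2 | k <- iota 1 l] ++ up a l.*2 ++ nseq l.+1 (a l.*2.+1)).
Proof.
elim: l => [|l IH] lN.
  by apply: transports_ext (transports_rot_left [::] (a 1)) => c; rewrite act_phiV_top.
rewrite doubleS in lN *; have {}IH := IH (leq_trans (leqnSn _) (ltnW lN)).
set x := a l.*2.+1; set y := a l.*2.+2; set z := a l.*2.+3.
set Up := up a l.*2; set Bb := [seq bbar a k.*2 | k <- iota 1 l].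
have xy : meet_once x y by apply: chain_meet_once; lia.
have yz : meet_once y z by apply: chain_meet_once; lia.
have xz : disjoint x z by apply: chain_disjoint; lia.
have -> : simL (up a l.*2.+3 ++ up a l.*2.+2) (Up ++ x :: Up ++ [:: y; z; x; y]).
  rewrite !upS -/x -/y -/z -/Up -!catA !cat1s.
  rewrite (simL_commute_right (c := z) (M := Up)) ?(simL_commute_right (c := y) (M := Up)).
  - reflexivity.
  - by apply: up_fix_tw; lia.
  - by apply: up_fix_tw; lia.
have T1 : transports (Up ++ x :: Up ++ [:: y; z; x; y]) (act (mcg_inv (phi a l)))
    (Bb ++ Up ++ nseq l.+1 x ++
       [:: iter l.+1 (act (mcg_inv (tw x))) y; z; x; iter l.+1 (act (mcg_inv (tw x))) y]).
  have Px : act (mcg_inv (phi a l)) x = x.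
    apply: act_inv_fix; rewrite act_phi_top => [|k kl]; last by apply: chain_disjoint; lia.
    by apply: iter_fix; apply: tw_self.
  have Py : act (mcg_inv (phi a l)) y = iter l.+1 (act (mcg_inv (tw x))) y.
    by rewrite act_phiV_top => // k kl; [apply: chain_disjoint | apply: chain_disjoint_sym]; lia.
  have Pz : act (mcg_inv (phi a l)) z = z.
    by apply: act_inv_fix; rewrite phi_fix => // k kl; apply: chain_disjoint; lia.
  by move: (transports_suffix [:: y; z; x; y] IH); rewrite upS -!catA /= Px Py Pz.
have T2 := transports_prefix (Bb ++ Up) (three_chain_up xy yz xz l.+1).
rewrite map_iter_fix -?catA in T2; last first.
  by apply: map_act_inv_fix; rewrite map_cat up_fix_tw ?bbar_fix //; lia.
have -> : [seq bbar a k.*2 | k <- iota 1 l.+1] = Bb ++ [:: bbar a l.*2.+2].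
  by rewrite iotaSr map_cat /= add1n doubleS.
rewrite !upS -/Up -!catA !cat1s -(simL_commute_left (c := bbar a l.*2.+2) (M := Up)).
  apply: transports_ext (transports_comp T1 T2) => c.
  by rewrite act_phiVS // => k kl; apply: chain_disjoint; lia.
exact: up_fix_bbar.
Qed.
End Chain.

Theorem lemma3p4 (Sf : surface) (l : nat) (a : nat -> Curve Sf) (D E : word Sf) :
  1 <= l -> is_chain a l.*2.+1 ->
  simC (D ++ down a l.*2 ++ down a l.*2.+1 ++ E)
       (conjw (phi a l) D
          ++ (nseq l.+1 (a l.*2.+1) ++ down a l.*2)
          ++ [seq bcurve a k.*2 | k <- rev (iota 1 l)]
          ++ conjw (phi a l) E)
  /\
  simC (D ++ up a l.*2.+1 ++ up a l.*2 ++ E)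
       (conjw (mcg_inv (phi a l)) D
          ++ [seq bbar a k.*2 | k <- iota 1 l]
          ++ (up a l.*2 ++ nseq l.+1 (a l.*2.+1))
          ++ conjw (mcg_inv (phi a l)) E).
Proof.
move=> _ chain; rewrite /conjw -!catA; split.
- by have := transports_down chain (leqnn _) D E; rewrite -!catA.
- by have := transports_up chain (leqnn _) D E; rewrite -!catA.
Qed.
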